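(* Let $n \ge 2$ be an integer and let $1 \le \underline{x}_i < \bar{x}_i$ for $i \in \{1,2\}$. For every $(x_1,x_2) \in [\underline{x}_1,\bar{x}_1] \times [\underline{x}_2,\bar{x}_2]$, the set $S(x)$ of optimal solutions of the problem $$\max_{y \in \mathbb{R}^{n+2}} \; y_1 - y_n\,(x_1 + x_2 - y_{n+1} - y_{n+2})$$ subject to $y_1 + y_n = \tfrac12$, $y_i^2 \le y_{i+1}$ for $i \in \{1,\dots,n-1\}$, $y_i \ge 0$ for $i \in \{1,\dots,n\}$, $y_{n+1} \in [0,x_1]$, $y_{n+2} \in [-x_2,x_2]$, is a singleton. *)

From HB Require Import structures.
From mathcomp Require Import all_boot all_order all_algebra.
From mathcomp Require Import reals.
Set Implicit Arguments. Unset Strict Implicit. Unset Printing Implicit Defensive.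
Import Order.TTheory GRing.Theory Num.Theory.
Local Open Scope ring_scope.

(* A vector y in R^(n+2) is a function 'I_(n+2) -> R.  The paper uses 1-based
   indices y_1, ..., y_(n+2); [yc y k] is the paper's y_k (stored at index k-1). *)
Definition yc (R : realType) (n : nat) (y : 'I_(n.+2) -> R) (k : nat) : R :=
  y (inord k.-1).

Definition feasible (R : realType) (n : nat) (x1 x2 : R) (y : 'I_(n.+2) -> R) : Prop :=
  [/\ yc y 1 + yc y n = 2^-1,
      (forall i : nat, (1 <= i <= n.-1)%N -> yc y i ^+ 2 <= yc y i.+1),
      (forall i : nat, (1 <= i <= n)%N -> 0 <= yc y i),
      0 <= yc y n.+1 <= x1 &
      - x2 <= yc y n.+2 <= x2].

Definition objective (R : realType) (n : nat) (x1 x2 : R) (y : 'I_(n.+2) -> R) : R :=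
  yc y 1 - yc y n * (x1 + x2 - yc y n.+1 - yc y n.+2).

Definition optimal (R : realType) (n : nat) (x1 x2 : R) (y : 'I_(n.+2) -> R) : Prop :=
  @feasible R n x1 x2 y /\
  forall z : 'I_(n.+2) -> R, @feasible R n x1 x2 z -> @objective R n x1 x2 z <= @objective R n x1 x2 y.

(* Every feasible y has objective at most y_1, because y_n >= 0 and
   y_(n+1) <= x1, y_(n+2) <= x2.  Chaining y_i^2 <= y_(i+1) gives
   y_1^(2^(n-1)) <= y_n = 1/2 - y_1, so y_1 <= c, where c > 0 is the root of
   c + c^(2^(n-1)) = 1/2 (t + t^N is increasing on t >= 0).  The point
   y_k = c^(2^(k-1)) (k <= n), y_(n+1) = x1, y_(n+2) = x2 attains c.
   Conversely, an optimal y has y_1 = c, hence y_n = c^(2^(n-1)) > 0; this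
   forces x1 + x2 - y_(n+1) - y_(n+2) <= 0, i.e. y_(n+1) = x1 and y_(n+2) = x2,
   and squeezes each y_k between y_1^(2^(k-1)) and the 2^(n-k)-th root of y_n. *)

From HB Require Import structures.
From mathcomp Require Import all_boot all_order all_algebra.
From mathcomp Require Import reals boolp classical_sets topology normedtype realfun.
From mathcomp Require Import ring lra.
Import Order.TTheory GRing.Theory Num.Theory numFieldNormedType.Exports.
Set Implicit Arguments. Unset Strict Implicit. Unset Printing Implicit Defensive.
Local Open Scope ring_scope.

Section SquareChain.
Variables (R : realDomainType) (u : nat -> R) (j d : nat).
Hypothesis u_ge0 : forall i, (j <= i <= j + d)%N -> 0 <= u i.
Hypothesis u_sqr_le : forall i, (j <= i < j + d)%N -> u i ^+ 2 <= u i.+1.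

Lemma sqr_chain_le k m : (k <= m <= d)%N -> u (j + k) ^+ (2 ^ (m - k)) <= u (j + m).
Proof.
elim: m => [|m IH] /andP[km md]; first by move: km; rewrite leqn0 => /eqP->.
have [->|km'] := eqVneq k m.+1; first by rewrite subnn expr1.
have {}km : (k <= m)%N by rewrite -ltnS ltn_neqAle km' km.
have jm_ge0 : 0 <= u (j + m) by rewrite u_ge0 // leq_addr leq_add2l ltnW.
rewrite subSn // expnSr exprM addnS.
apply: le_trans (@u_sqr_le (j + m) _); last by rewrite leq_addr ltn_add2l.
rewrite lerXn2r ?nnegrE ?exprn_ge0 ?IH ?km ?(ltnW md) //.
by rewrite u_ge0 // leq_addr leq_add2l (leq_trans km (ltnW md)).
Qed.

Lemma sqr_chain_eq k : u (j + d) = u j ^+ (2 ^ d) -> (k <= d)%N ->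
  u (j + k) = u j ^+ (2 ^ k).
Proof.
move=> ud kd; have jk_ge0 : 0 <= u (j + k) by rewrite u_ge0 // leq_addr leq_add2l.
apply/eqP; rewrite eq_le.
have := sqr_chain_le (k := 0) (m := k); rewrite addn0 subn0 kd => -> //; rewrite andbT.
have dE : (2 ^ d = 2 ^ k * 2 ^ (d - k))%N by rewrite -expnD subnKC.
have := sqr_chain_le (k := k) (m := d); rewrite kd leqnn ud dE exprM => /(_ isT).
by rewrite ler_pXn2r ?expn_gt0 ?nnegrE ?exprn_ge0 // u_ge0 // leqnn leq_addr.
Qed.

End SquareChain.

Lemma ler_add_exprn (R : realDomainType) (N : nat) :
  {in Num.nneg &, {mono (fun t : R => t + t ^+ N) : a b / a <= b}}.
Proof.
move=> a b; rewrite !nnegrE => a0 b0 /=; apply/idP/idP => [|ab].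
  by apply: contraTT; rewrite -!ltNge => ba; rewrite ltr_leD // lerXn2r ?nnegrE // ltW.
by rewrite lerD // lerXn2r ?nnegrE.
Qed.

Lemma exists_add_exprn_eq (R : realType) (N : nat) (a : R) : (0 < N)%N -> 0 < a ->
  exists2 c, 0 < c & c + c ^+ N = a.
Proof.
move=> N_gt0 a_gt0; pose f t : R := t + t ^+ N.
have f0 : f 0 = 0 by rewrite /f expr0n eqn0Ngt N_gt0 addr0.
have f_cont : continuous f.
  move=> t; apply: (@continuousD R R^o R id (fun t => t ^+ N)).
  - exact: cvg_id.
  - exact: exprn_continuous.
have f_cont_itv : {within `[0, a], continuous f}%classic by exact: continuous_subspaceT.
have [|c] := @IVT R f 0 a a (ltW a_gt0) f_cont_itv.
  by rewrite f0 ge_min le_max ltW //= lerDl exprn_ge0 ?orbT // ltW.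
rewrite in_itv /= => /andP[c_ge0 _] fc; exists c => //.
by rewrite lt_def c_ge0 andbT; apply: contraTneq a_gt0 => c0; rewrite -fc c0 f0 ltxx.
Qed.

Lemma yc_inj (R : realType) (n : nat) (y z : 'I_n.+2 -> R) :
  (forall k, (1 <= k <= n.+2)%N -> yc y k = yc z k) -> y = z.
Proof.
move=> yzE; apply/funext => i.
by have := yzE i.+1 (ltn_ord i); rewrite /yc /= inord_val.
Qed.

Section Problem.
Variables (R : realType) (n : nat) (x1 x2 : R).
Hypothesis n_gt0 : (0 < n)%N.

Lemma feasible_sqr_chain (z : 'I_n.+2 -> R) : feasible x1 x2 z ->
  (forall i, (1 <= i <= 1 + n.-1)%N -> 0 <= yc z i) /\
  (forall i, (1 <= i < 1 + n.-1)%N -> yc z i ^+ 2 <= yc z i.+1).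
Proof.
case=> _ z_sqr z_ge0 _ _; split=> i; rewrite add1n ?ltnS ?prednK //.
- exact: z_ge0.
- exact: z_sqr.
Qed.

Lemma feasible_yc1_exprn_le (z : 'I_n.+2 -> R) : feasible x1 x2 z ->
  yc z 1 ^+ (2 ^ n.-1) <= yc z n.
Proof.
move=> /feasible_sqr_chain[z_ge0 z_sqr].
have := sqr_chain_le z_ge0 z_sqr (k := 0) (m := n.-1).
by rewrite addn0 add1n prednK // subn0 leqnn; apply.
Qed.

Lemma objective_le_yc1 (z : 'I_n.+2 -> R) :
  feasible x1 x2 z -> objective x1 x2 z <= yc z 1.
Proof.
case=> _ _ z_ge0 /andP[_ z1_le] /andP[_ z2_le].
by rewrite /objective gerBl mulr_ge0 ?z_ge0 ?n_gt0 ?leqnn //; lra.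
Qed.

Lemma feasible_yc1_le (c : R) (z : 'I_n.+2 -> R) :
  0 <= c -> c + c ^+ (2 ^ n.-1) = 2^-1 -> feasible x1 x2 z -> yc z 1 <= c.
Proof.
move=> c_ge0 cE fz; have [zE _ z_ge0 _ _] := fz.
rewrite -(ler_add_exprn (2 ^ n.-1)) ?nnegrE ?z_ge0 // cE -zE lerD2l.
exact: feasible_yc1_exprn_le.
Qed.

Definition maximizer (c : R) : 'I_n.+2 -> R :=
  fun i => if (i < n)%N then c ^+ (2 ^ i) else if i == n :> nat then x1 else x2.

Lemma yc_maximizer c k : (1 <= k <= n)%N -> yc (maximizer c) k = c ^+ (2 ^ k.-1).
Proof.
case/andP=> k_gt0 k_le; have k_lt : (k.-1 < n)%N by rewrite prednK.
by rewrite /yc /maximizer inordK ?k_lt // (leq_trans k_lt) // leqW.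
Qed.

Lemma yc_maximizer_n1 c : yc (maximizer c) n.+1 = x1.
Proof. by rewrite /yc /maximizer inordK //= ltnn eqxx. Qed.

Lemma yc_maximizer_n2 c : yc (maximizer c) n.+2 = x2.
Proof. by rewrite /yc /maximizer inordK //= ltnNge leqnSn /= gtn_eqF. Qed.

Variable c : R.
Hypotheses (x1_ge0 : 0 <= x1) (x2_ge0 : 0 <= x2) (c_gt0 : 0 < c).
Hypothesis cE : c + c ^+ (2 ^ n.-1) = 2^-1.

Lemma maximizer_feasible : feasible x1 x2 (maximizer c).
Proof.
split.
- by rewrite !yc_maximizer ?leqnn ?n_gt0.
- move=> i /andP[i_gt0 i_le].
  rewrite !yc_maximizer ?i_gt0 ?i_le ?(leq_trans i_le (leq_pred n)) //.
  + by rewrite -exprM -expnSr prednK.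
  + by rewrite -(prednK n_gt0) ltnS.
- by move=> i i_range; rewrite yc_maximizer // exprn_ge0 // ltW.
- by rewrite yc_maximizer_n1 lexx x1_ge0.
- by rewrite yc_maximizer_n2 lexx andbT lerNl (le_trans _ x2_ge0) // oppr_le0.
Qed.

Lemma objective_maximizer : objective x1 x2 (maximizer c) = c.
Proof.
rewrite /objective yc_maximizer_n1 yc_maximizer_n2 ?leqnn ?n_gt0 //.
by rewrite yc_maximizer ?leqnn // expr1; ring.
Qed.

Lemma maximizer_optimal : optimal x1 x2 (maximizer c).
Proof.
split=> [|z fz]; first exact: maximizer_feasible.
rewrite objective_maximizer (le_trans (objective_le_yc1 fz)) //.
exact: feasible_yc1_le (ltW c_gt0) cE fz.
Qed.

Lemma optimal_maximizer (z : 'I_n.+2 -> R) : optimal x1 x2 z -> z = maximizer c.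
Proof.
case=> fz /(_ _ maximizer_feasible); rewrite objective_maximizer => obj_ge.
have z1E : yc z 1 = c.
  apply/eqP; rewrite eq_le (feasible_yc1_le (ltW c_gt0) cE fz) /=.
  exact: le_trans obj_ge (objective_le_yc1 fz).
have [zE _ _ /andP[_ z_n1_le] /andP[_ z_n2_le]] := fz.
have znE : yc z n = c ^+ (2 ^ n.-1) by apply: (addrI c); rewrite cE -z1E.
have slack_le0 : x1 + x2 - yc z n.+1 - yc z n.+2 <= 0.
  rewrite -(pmulr_rle0 _ (exprn_gt0 (2 ^ n.-1) c_gt0)) -znE.
  by move: obj_ge; rewrite /objective z1E; lra.
have [z_sqr_ge0 z_sqr_le] := feasible_sqr_chain fz.
apply: yc_inj => k /andP[k_gt0]; rewrite leq_eqVlt ltnS leq_eqVlt ltnS.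
case/or3P=> [/eqP-> | /eqP-> | k_le]; rewrite ?yc_maximizer_n1 ?yc_maximizer_n2; try lra.
rewrite yc_maximizer ?k_gt0 // -z1E -(prednK k_gt0) -add1n.
apply: (sqr_chain_eq z_sqr_ge0 z_sqr_le); first by rewrite add1n prednK // znE z1E.
by rewrite -!subn1 leq_sub2r.
Qed.

End Problem.

Theorem mainTheorem2 (R : realType) (n : nat) (lx1 ux1 lx2 ux2 x1 x2 : R) :
  (2 <= n)%N ->
  1 <= lx1 -> lx1 < ux1 -> 1 <= lx2 -> lx2 < ux2 ->
  lx1 <= x1 <= ux1 -> lx2 <= x2 <= ux2 ->
  (* S(x) is a singleton *)
  exists y : 'I_(n.+2) -> R,
    forall z : 'I_(n.+2) -> R, @optimal R n x1 x2 z <-> z = y.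
Proof.
move=> n_ge2 lx1_ge1 _ lx2_ge1 _ /andP[lx1_le _] /andP[lx2_le _].
have n_gt0 : (0 < n)%N by exact: ltnW.
have x1_ge0 : 0 <= x1 by lra.
have x2_ge0 : 0 <= x2 by lra.
have half_gt0 : 0 < 2^-1 :> R by rewrite invr_gt0.
have [c c_gt0 cE] := exists_add_exprn_eq (expn_gt0 2 n.-1) half_gt0.
exists (maximizer x1 x2 c) => z; split=> [|->].
- exact: optimal_maximizer.
- exact: maximizer_optimal.
Qed.
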